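(* For every $n\ge1$, $q(n;\mathit{trees})<\log^*n+5$; that is, there exists a tree $T$ with $n$ vertices such that $D(T)<\log^* n+5$.
   Context: The tower function is $T(0)=1$, $T(i)=2^{T(i-1)}$; $\log^* n=\min\{i: T(i)\ge n\}$. Graphs are simple undirected graphs viewed as structures for the first-order language with adjacency symbol $\sim$ and equality. A sentence defines a finite graph $G$ if it is true on $G$ and false on every graph (of any cardinality) not isomorphic to $G$; $D(G)$ is the minimum quantifier rank (maximum number of nested quantifiers) of a sentence defining $G$. $q(n;\mathit{trees})=\min\{D(T): T \text{ a tree with } n\text{ vertices}\}$. *)

From mathcomp Require Import all_boot.
Set Implicit Arguments. Unset Strict Implicit. Unset Printing Implicit Defensive.

Fixpoint tower (i : nat) : nat := if i is i'.+1 then 2 ^ tower i' else 1.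

Lemma tower_ge (i : nat) : i <= tower i.
Proof. elim: i => [//|i IH] /=; exact: leq_ltn_trans IH (ltn_expl _ (ltnSn 1)). Qed.

Lemma logstar_ex (n : nat) : exists i, n <= tower i.
Proof. by exists n; apply: tower_ge. Qed.

Definition logstar (n : nat) : nat := ex_minn (logstar_ex n).

(** First-order formulas, de Bruijn variables (index 0 = innermost binder). *)
Inductive form : Type :=
  | FAdj : nat -> nat -> form
  | FEq  : nat -> nat -> form
  | FTrue : form
  | FFalse : form
  | FNot : form -> form
  | FAnd : form -> form -> form
  | FOr  : form -> form -> form
  | FImp : form -> form -> form
  | FEx  : form -> form
  | FAll : form -> form.

Fixpoint qr (f : form) : nat :=
  match f with
  | FAdj _ _ | FEq _ _ | FTrue | FFalse => 0
  | FNot g => qr g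
  | FAnd g h | FOr g h | FImp g h => maxn (qr g) (qr h)
  | FEx g | FAll g => (qr g).+1
  end.

Fixpoint bounded (k : nat) (f : form) : bool :=
  match f with
  | FAdj i j | FEq i j => (i < k) && (j < k)
  | FTrue | FFalse => true
  | FNot g => bounded k g
  | FAnd g h | FOr g h | FImp g h => bounded k g && bounded k h
  | FEx g | FAll g => bounded k.+1 g
  end.

Definition sentence (f : form) : bool := bounded 0 f.

Fixpoint sat (V : Type) (R : V -> V -> Prop) (env : seq V) (f : form) : Prop :=
  match f with
  | FAdj i j => match onth env i, onth env j with
                | Some a, Some b => R a b | _, _ => False end
  | FEq i j => match onth env i, onth env j with
                | Some a, Some b => a = b | _, _ => False end
  | FTrue => True
  | FFalse => False
  | FNot g => ~ sat R env g
  | FAnd g h => sat R env g /\ sat R env h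
  | FOr g h => sat R env g \/ sat R env h
  | FImp g h => sat R env g -> sat R env h
  | FEx g => exists x : V, sat R (x :: env) g
  | FAll g => forall x : V, sat R (x :: env) g
  end.

Definition is_graph (V : Type) (R : V -> V -> Prop) : Prop :=
  (forall x y, R x y -> R y x) /\ (forall x, ~ R x x).

Definition iso (n : nat) (e : rel 'I_n) (V : Type) (R : V -> V -> Prop) : Prop :=
  exists f : 'I_n -> V,
    injective f /\ (forall y : V, exists x, f x = y) /\
    (forall x y, e x y <-> R (f x) (f y)).

Definition defines (n : nat) (e : rel 'I_n) (phi : form) : Prop :=
  sentence phi /\
  sat (fun x y : 'I_n => e x y) [::] phi /\
  (forall (V : Type) (R : V -> V -> Prop),
      is_graph R -> sat R [::] phi -> iso e R).

(** D(G) < k  <->  some sentence of quantifier rank < k defines G *)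
Definition D_lt (n : nat) (e : rel 'I_n) (k : nat) : Prop :=
  exists phi, defines e phi /\ qr phi < k.

Definition is_tree (n : nat) (e : rel 'I_n) : Prop :=
  symmetric e /\ irreflexive e /\
  (forall x y : 'I_n, connect e x y) /\
  ~ (exists s : seq 'I_n, [&& uniq s, 3 <= size s & cycle e s]).

(* Let T_i be the rooted tree whose root carries one copy of T_j for each j such that
   the j-th binary digit of i is 1.  "The branch at x pointing away from its neighbour p
   is T_i" recurses from i to these positions j, which are logarithmically smaller, so
   for i < tower L it is expressible with quantifier rank L + 1.  The tree with n
   vertices is a root carrying copies of T_j for j in a set S of numbers below N < n;
   it is defined by a sentence of rank L + 4 (with N <= tower L) saying: some vertex r
   has exactly the branches T_j, j in S; every other vertex is the root of some T_i,
   i < N, hanging from a neighbour; siblings have distinct types; and no edge is typed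
   in both directions.  These conditions force the types in any model to be the
   intended ones, so an isomorphism can be built from the root outwards.  S is chosen
   sparse: removing any one element of S leaves powers 2^a adding up to at least N, so
   that the root, seen from one of its children, is no T_i with i < N.  Trees with at
   most six vertices are instead pinned down by the sentence listing their vertices. *)

From Stdlib Require Import ClassicalEpsilon.
From mathcomp Require Import all_boot zify.
Set Implicit Arguments. Unset Strict Implicit. Unset Printing Implicit Defensive.

(** * Binary digits *)

Definition bit (m i : nat) : bool := odd (m %/ 2 ^ i).

Definition bits (m : nat) : seq nat := [seq i <- iota 0 m | bit m i].

Lemma bit_exp2_le m i : bit m i -> 2 ^ i <= m.
Proof. by rewrite /bit; case: leqP => // lt_m; rewrite divn_small. Qed.

Lemma bit_lt_exp2 m i L : m < 2 ^ L -> bit m i -> i < L.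
Proof.
move=> ltm /bit_exp2_le le_m.
by rewrite -(ltn_exp2l _ _ (ltnSn 1)) (leq_ltn_trans le_m).
Qed.

Lemma bit_lt m i : bit m i -> i < m.
Proof. exact/bit_lt_exp2/ltn_expl. Qed.

Lemma mem_bits m i : (i \in bits m) = bit m i.
Proof. by rewrite mem_filter mem_iota andb_idr // => /bit_lt. Qed.

Lemma bits_lt m K : m <= K -> {in bits m, forall i, i < K}.
Proof. by move=> m_K i /[!mem_bits] /bit_lt /leq_trans; apply. Qed.

Lemma uniq_bits m : uniq (bits m).
Proof. by rewrite filter_uniq // iota_uniq. Qed.

Lemma sorted_bits m : sorted ltn (bits m).
Proof. by rewrite sorted_filter ?iota_ltn_sorted //; apply: ltn_trans. Qed.

Lemma modn_exp2S m k : m %% 2 ^ k.+1 = bit m k * 2 ^ k + m %% 2 ^ k.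
Proof.
rewrite expnS {1}(divn_eq (m %% (2 * 2 ^ k)) (2 ^ k)) -modn_divl modn2.
by rewrite (modn_dvdm _ (dvdn_mull _ (dvdnn _))).
Qed.

Lemma modn_exp2_bits m k : m %% 2 ^ k = \sum_(i < k) bit m i * 2 ^ i.
Proof.
elim: k => [|k IH]; first by rewrite big_ord0 modn1.
by rewrite big_ord_recr /= modn_exp2S IH addnC.
Qed.

Lemma sum_bits m : \sum_(i <- bits m) 2 ^ i = m.
Proof.
rewrite big_filter -[m in iota 0 m]subn0 -/(index_iota 0 m) big_mkord big_mkcond /=.
rewrite -[RHS](modn_small (ltn_expl m (ltnSn 1))) modn_exp2_bits.
by apply: eq_bigr => i _; case: bit; rewrite ?mul1n.
Qed.

Lemma bits_inj a b : bits a =i bits b -> a = b.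
Proof.
move=> eq_ab; rewrite -(sum_bits a) -(sum_bits b).
by rewrite (irr_sorted_eq ltn_trans ltnn (sorted_bits a) (sorted_bits b) eq_ab).
Qed.

Lemma leq_sum_subset (A B : seq nat) (F : nat -> nat) :
  uniq A -> uniq B -> {subset A <= B} -> \sum_(a <- A) F a <= \sum_(b <- B) F b.
Proof. exact: (uniq_sub_le_big leqnn (fun m n => leq_addr n m) xpredT F). Qed.

Lemma sum_exp2_le_bits (A : seq nat) m : uniq A -> {subset A <= bits m} ->
  \sum_(a <- A) 2 ^ a <= m.
Proof.
move=> uA sub_A; rewrite -[X in _ <= X]sum_bits.
exact: leq_sum_subset uA (uniq_bits m) sub_A.
Qed.

(** * Branch formulas *)

Definition FOrs (fs : seq form) : form := foldr FOr FFalse fs.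
Definition FAnds (fs : seq form) : form := foldr FAnd FTrue fs.

Lemma qr_FOrs fs Q : all (fun f => qr f <= Q) fs -> qr (FOrs fs) <= Q.
Proof. by elim: fs => //= f fs IH /andP[le_f /IH le_fs]; rewrite geq_max le_f. Qed.

Lemma qr_FAnds fs Q : all (fun f => qr f <= Q) fs -> qr (FAnds fs) <= Q.
Proof. by elim: fs => //= f fs IH /andP[le_f /IH le_fs]; rewrite geq_max le_f. Qed.

Lemma bounded_FOrs d fs : bounded d (FOrs fs) = all (bounded d) fs.
Proof. by elim: fs => //= f fs ->. Qed.

Lemma bounded_FAnds d fs : bounded d (FAnds fs) = all (bounded d) fs.
Proof. by elim: fs => //= f fs ->. Qed.

Section SatConnectives.
Variables (V : Type) (R : V -> V -> Prop) (I : eqType) (F : I -> form).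

Lemma sat_FOrs env l :
  sat R env (FOrs [seq F i | i <- l]) <-> exists2 i, i \in l & sat R env (F i).
Proof.
elim: l => [|a l IH] /=; first by split => // -[].
rewrite IH; split=> [[sat_a | [i l_i sat_i]] | [i]].
- by exists a; rewrite ?mem_head.
- by exists i; rewrite // in_cons l_i orbT.
- by rewrite in_cons => /predU1P[-> | l_i] sat_i; [left | right; exists i].
Qed.

Lemma sat_FAnds env l :
  sat R env (FAnds [seq F i | i <- l]) <-> {in l, forall i, sat R env (F i)}.
Proof.
elim: l => [|a l IH] /=; first by split.
rewrite IH; split=> [[sat_a sat_l] i | sat_al].
- by rewrite in_cons => /predU1P[-> | /sat_l].
- by split=> [|i l_i]; apply: sat_al; rewrite in_cons ?eqxx ?l_i ?orbT.
Qed.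

End SatConnectives.

Fixpoint branch_form (k : nat) (ts : seq nat) (x p : nat) : form :=
  if k is k'.+1 then
    FAnd (FAll (FImp (FAdj 0 x.+1)
                 (FOr (FEq 0 p.+1) (FOrs [seq branch_form k' (bits i) 0 x.+1 | i <- ts]))))
         (FAnds [seq FEx (FAnd (FAdj 0 x.+1)
                    (FAnd (FNot (FEq 0 p.+1)) (branch_form k' (bits i) 0 x.+1))) | i <- ts])
  else FFalse.

(* In a tree, with [ts = bits i], it says
   that the component of [x] away from [p] is [T_i], up to repeated siblings. *)
Fixpoint branch (V : Type) (R : V -> V -> Prop) (k : nat) (ts : seq nat) (x p : V) : Prop :=
  if k is k'.+1 then
    (forall y, R y x -> y = p \/ exists2 i, i \in ts & branch R k' (bits i) y x) /\
    (forall i, i \in ts -> exists y, [/\ R y x, y <> p & branch R k' (bits i) y x])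
  else False.

Lemma sat_branch_form (V : Type) (R : V -> V -> Prop) k ts env x p a b :
  onth env x = Some a -> onth env p = Some b ->
  sat R env (branch_form k ts x p) <-> branch R k ts a b.
Proof.
elim: k ts env x p a b => [//|k IH] ts env x p a b env_x env_p /=.
have IHy y i : sat R (y :: env) (branch_form k (bits i) 0 x.+1) <-> branch R k (bits i) y a.
  exact: IH.
rewrite (sat_FAnds R (fun i => FEx _)); split=> [[children types] | [children types]]; split.
- move=> y /= Ryx; have /= := children y; rewrite env_x env_p.
  case/(_ Ryx) => [->| /sat_FOrs[i ts_i /IHy]]; [by left | by right; exists i].
- move=> i /types [y [Ryx [y_p /IHy br_y]]]; exists y.
  by move: Ryx y_p => /=; rewrite env_x env_p.
- move=> y /=; rewrite env_x env_p => /children[->| [i ts_i br_y]]; first by left.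
  by right; apply/sat_FOrs; exists i; rewrite ?IHy.
- move=> i /types [y [Ryx y_p br_y]]; exists y.
  by split; [rewrite /= env_x | split; [rewrite /= env_p | apply/IHy]].
Qed.

Lemma bounded_branch_form k ts x p d :
  x < d -> p < d -> bounded d (branch_form k ts x p).
Proof.
elim: k ts x p d => [//|k IH] ts x p d x_d p_d /=.
rewrite !ltnS x_d p_d bounded_FOrs bounded_FAnds !all_map.
by apply/andP; split; apply/allP => i _ /=; rewrite ?ltnS ?x_d ?p_d IH.
Qed.

Lemma qr_branch_form_bits k ts x p Q :
  {in ts, forall i, qr (branch_form k (bits i) 0 x.+1) <= Q} ->
  qr (branch_form k.+1 ts x p) <= Q.+1.
Proof.
move=> le_Q /=; rewrite !max0n geq_max ltnS qr_FOrs ?qr_FAnds ?all_map //.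
  by apply/allP => i /le_Q /=; rewrite !max0n.
by apply/allP => i /le_Q.
Qed.

Lemma qr_branch_form_tower L k m x p :
  m < tower L -> qr (branch_form k (bits m) x p) <= L.+1.
Proof.
elim: L k m x p => [|L IH] [|k] m x p //= m_lt; apply: qr_branch_form_bits => i.
  by move: m_lt; rewrite ltnS leqn0 => /eqP->.
by rewrite mem_bits => /(bit_lt_exp2 m_lt) /IH.
Qed.


(** * The defining sentence *)

Definition typed_form (N x p : nat) : form :=
  FOrs [seq branch_form N (bits i) x p | i <- iota 0 N].

Definition typed (V : Type) (R : V -> V -> Prop) (N : nat) (x p : V) : Prop :=
  exists2 i, i < N & branch R N (bits i) x p.


Definition root_form (S : seq nat) (N : nat) : form :=
  FEx (FAnd (branch_form N.+1 S 0 0)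
            (FAll (FOr (FEq 0 1) (FEx (FAnd (FAdj 1 0) (typed_form N 1 0)))))).

Definition siblings_form (N : nat) : form :=
  FAll (FAll (FAll (FImp (FAnd (FAdj 1 2) (FAnd (FAdj 0 2) (FNot (FEq 1 0))))
    (FNot (FOrs [seq FAnd (branch_form N (bits i) 1 2) (branch_form N (bits i) 0 2)
                | i <- iota 0 N]))))).

Definition orientation_form (N : nat) : form :=
  FAll (FAll (FImp (FAdj 1 0) (FNot (FAnd (typed_form N 1 0) (typed_form N 0 1))))).

Definition tree_sentence (S : seq nat) (N : nat) : form :=
  FAnd (root_form S N) (FAnd (siblings_form N) (orientation_form N)).

Section TreeSentenceSemantics.
Variables (V : Type) (R : V -> V -> Prop) (S : seq nat) (N : nat).

(* The root is its own "parent": as [R] is irreflexive, all its neighbours are typed. *)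
Definition rooted : Prop :=
  exists r, branch R N.+1 S r r /\ forall z, z = r \/ exists2 w, R z w & typed R N z w.

Definition siblings_distinct : Prop :=
  forall x y z i, R y x -> R z x -> y <> z -> i < N ->
    branch R N (bits i) y x -> branch R N (bits i) z x -> False.

Definition consistently_oriented : Prop :=
  forall z w, R z w -> typed R N z w -> typed R N w z -> False.

Lemma sat_typed_form env x p a b : onth env x = Some a -> onth env p = Some b ->
  sat R env (typed_form N x p) <-> typed R N a b.
Proof.
move=> env_x env_p; rewrite sat_FOrs.
have sat_br i := sat_branch_form R N (bits i) env_x env_p.
split=> -[i]; first by rewrite mem_iota /= sat_br; exists i.
by rewrite -sat_br; exists i; rewrite ?mem_iota.
Qed.

Lemma sat_root_form : sat R [::] (root_form S N) <-> rooted.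
Proof.
have sat_root r := @sat_branch_form V R N.+1 S [:: r] 0 0 r r erefl erefl.
have sat_typed z w r := @sat_typed_form [:: w; z; r] 1 0 z w erefl erefl.
split=> /= -[r [root_r cover]]; exists r; split; try exact/sat_root.
  move=> z; have /= [->|[w [Rzw]]] := cover z; first by left.
  by rewrite sat_typed; right; exists w.
move=> z; case: (cover z) => [->|[w Rzw typed_zw]]; first by left.
by right; exists w; rewrite /= sat_typed.
Qed.

Lemma sat_siblings_form : sat R [::] (siblings_form N) <-> siblings_distinct.
Proof.
have sat_br1 i (x y z : V) := @sat_branch_form V R N (bits i) [:: z; y; x] 1 2 y x erefl erefl.
have sat_br0 i (x y z : V) := @sat_branch_form V R N (bits i) [:: z; y; x] 0 2 z x erefl erefl.
split=> [sib x y z i Ryx Rzx y_z i_N br_y br_z | sib /= x y z [Ryx [Rzx y_z]]].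
  apply: (sib x y z) => //; apply/(sat_FOrs _ (fun i => FAnd _ _)).
  by exists i; rewrite ?mem_iota //= sat_br1 sat_br0.
case/(sat_FOrs _ (fun i => FAnd _ _)) => i; rewrite mem_iota => i_N /= [].
by rewrite sat_br1 sat_br0; apply: sib.
Qed.

Lemma sat_orientation_form : sat R [::] (orientation_form N) <-> consistently_oriented.
Proof.
have sat_t10 (z w : V) := @sat_typed_form [:: w; z] 1 0 z w erefl erefl.
have sat_t01 (z w : V) := @sat_typed_form [:: w; z] 0 1 w z erefl erefl.
split=> [/= orient z w Rzw t_zw t_wz | orient /= z w Rzw []].
  by apply: (orient z w Rzw); rewrite /= sat_t10 sat_t01.
by rewrite sat_t10 sat_t01; apply: orient.
Qed.

Lemma sat_tree_sentence : sat R [::] (tree_sentence S N) <->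
  [/\ rooted, siblings_distinct & consistently_oriented].
Proof.
split=> [[/sat_root_form ? [/sat_siblings_form ? /sat_orientation_form ?]] //|].
by case=> /sat_root_form ? /sat_siblings_form ? /sat_orientation_form ?.
Qed.

End TreeSentenceSemantics.

Lemma bounded_typed_form N x p d : x < d -> p < d -> bounded d (typed_form N x p).
Proof.
move=> x_d p_d; rewrite /typed_form bounded_FOrs all_map.
by apply/allP => i _; apply: bounded_branch_form.
Qed.

Lemma sentence_tree_sentence S N : sentence (tree_sentence S N).
Proof.
rewrite /sentence /= !bounded_typed_form // !bounded_FOrs bounded_FAnds !all_map.
by rewrite !andbT; repeat (apply/andP; split); apply/allP => i _ /=;
  rewrite ?bounded_branch_form.
Qed.

Lemma qr_tree_sentence S N L : N <= tower L -> {in S, forall j, j < N} ->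
  qr (tree_sentence S N) <= L + 4.
Proof.
move=> N_L S_N.
have qr_br i x p : i < N -> qr (branch_form N (bits i) x p) <= L.+1.
  by move=> i_N; apply: qr_branch_form_tower; apply: leq_trans N_L.
have qr_typed x p : qr (typed_form N x p) <= L.+1.
  by rewrite /typed_form qr_FOrs // all_map; apply/allP => i /[!mem_iota] /= /qr_br.
have qr_root : qr (branch_form N.+1 S 0 0) <= L.+2.
  by apply: qr_branch_form_bits => i /S_N /qr_br.
rewrite /tree_sentence /root_form.
move: (branch_form N.+1 S 0 0) qr_root => root qr_root /=.
rewrite !max0n !geq_max addn4 !ltnS !geq_max !ltnS !(leq_trans (qr_typed _ _)) //.
rewrite (leq_trans qr_root) // qr_FOrs // all_map.
by apply/allP => i /[!mem_iota] /= i_N; rewrite geq_max !qr_br.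
Qed.

Section Branch.
Variables (V : Type) (R : V -> V -> Prop).

Lemma branch_neighbour k ts x p y : branch R k ts x p -> R y x -> y <> p ->
  exists2 i, i \in ts & branch R k.-1 (bits i) y x.
Proof. by case: k => [//|k] [children _] /children[]. Qed.

Lemma branch_child k ts x p i : branch R k ts x p -> i \in ts ->
  exists y, [/\ R y x, y <> p & branch R k.-1 (bits i) y x].
Proof. by case: k => [//|k] [_ types] /types. Qed.

Lemma branch_fuel K k ts x p : {in ts, forall i, i < K} ->
  branch R k ts x p -> branch R K.+1 ts x p.
Proof.
elim: K k ts x p => [|K IH] [|k] ts x p ts_K //= [children types]; split.
- by move=> y /children[->|[i /ts_K]]; [left|].
- by move=> i /ts_K.
- move=> y /children[->|[i ts_i br_i]]; [by left | right; exists i => //].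
  exact: IH (bits_lt (ltnSE (ts_K _ ts_i))) br_i.
- move=> i ts_i; have [y [Ryx y_p br_y]] := types i ts_i.
  by exists y; split=> //; apply: IH (bits_lt (ltnSE (ts_K _ ts_i))) br_y.
Qed.

Lemma branch_bits_fuel N k i x p : i < N -> branch R k (bits i) x p -> branch R N (bits i) x p.
Proof. by case: N => // N /ltnSE /bits_lt; apply: branch_fuel. Qed.

Lemma branch_bits_inj k k' a b x p :
  branch R k (bits a) x p -> branch R k' (bits b) x p -> a = b.
Proof.
elim: k k' a b x p => [|k IH] [|k'] a b x p //= [ch_a ty_a] [ch_b ty_b].
apply: bits_inj => i; apply/idP/idP => [/ty_a[y [Ryx y_p br_y]] | /ty_b[y [Ryx y_p br_y]]].
  by case: (ch_b y Ryx) => [//|[j b_j br_j]]; rewrite (IH _ _ _ _ _ br_y br_j).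
by case: (ch_a y Ryx) => [//|[j a_j br_j]]; rewrite -(IH _ _ _ _ _ br_j br_y).
Qed.

End Branch.

(** * Trees of addresses *)

Definition child_types (S a : seq nat) : seq nat := if a is i :: _ then bits i else S.

(* An address [[:: j_m; ...; j_1]] lists the types met on the way from a vertex up to the
   root of the tree with root types [S]: [j_1 \in S] and [j_(l+1) \in bits j_l]. *)
Fixpoint address (S a : seq nat) : bool :=
  if a is j :: a' then (j \in child_types S a') && address S a' else true.

Fixpoint addresses (k : nat) (ts a : seq nat) : seq (seq nat) :=
  if k is k'.+1 then a :: flatten [seq addresses k' (bits j) (j :: a) | j <- ts] else [::].

Definition tree_size (i : nat) : nat := size (addresses i.+1 (bits i) [::]).

Lemma child_types_cat S c a : child_types S (c ++ a) = child_types (child_types S a) c.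
Proof. by case: c. Qed.

Lemma address_cat S c a : address S (c ++ a) = address (child_types S a) c && address S a.
Proof. by elim: c => //= j c ->; rewrite child_types_cat andbA. Qed.

Lemma address_behead S a : address S a -> address S (behead a).
Proof. by case: a => //= j a /andP[]. Qed.

Lemma address_lt S N a : {in S, forall j, j < N} -> address S a -> {in a, forall j, j < N}.
Proof.
move=> S_N; elim: a => //= j a IH /andP[types_j addr_a] i /[!in_cons] /predU1P[->|]; last exact: IH.
case: a types_j {IH} addr_a (IH addr_a) => [/S_N //|i' a] /= /[!mem_bits] /bit_lt j_i' _ lt_N.
exact: ltn_trans j_i' (lt_N _ (mem_head _ _)).
Qed.

Lemma address_head_lt S N j a : {in S, forall i, i < N} -> address S (j :: a) -> j < N.
Proof. by move=> S_N /(address_lt S_N); apply; apply: mem_head. Qed.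

Lemma fuel_nil (ts : seq nat) : {in ts, forall j, j < 0} -> ts = [::].
Proof. by case: ts => // j ts /(_ j (mem_head _ _)). Qed.

Lemma suffix_addresses k ts a b : b \in addresses k ts a -> exists c, b = c ++ a.
Proof.
elim: k ts a => [//|k IH] ts a /[!in_cons] /predU1P[->|]; first by exists [::].
by case/flatten_mapP => j _ /IH[c ->]; exists (rcons c j); rewrite cat_rcons.
Qed.

Lemma mem_addresses k ts a b : {in ts, forall j, j < k} ->
  b \in addresses k.+1 ts a <-> exists2 c, b = c ++ a & address ts c.
Proof.
elim: k ts a b => [|k IH] ts a b ts_k.
  rewrite (fuel_nil ts_k) mem_seq1; split=> [/eqP->|[c ->]]; first by exists [::].
  by case/lastP: c => [//|c j]; rewrite -cats1 address_cat andbF.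
have bits_k j : j \in ts -> {in bits j, forall i, i < k} by move/ts_k/ltnSE/bits_lt.
rewrite in_cons; split=> [/predU1P[->|/flatten_mapP[j ts_j]] | [c -> addr_c]].
- by exists [::].
- case/IH=> [|c -> addr_c]; first exact: bits_k.
  by exists (rcons c j); rewrite ?cat_rcons // -cats1 address_cat /= ts_j addr_c.
- case/lastP: c addr_c => [_|c j]; first by rewrite eqxx.
  rewrite -cats1 address_cat /= andbT => /andP[addr_c ts_j].
  apply/orP; right; apply/flatten_mapP; exists j => //.
  by apply/IH; [exact: bits_k | exists c; rewrite -?catA].
Qed.

Lemma cat_cons_suffix_inj (T : eqType) (c c' a : seq T) j j' :
  c ++ j :: a = c' ++ j' :: a -> j = j'.
Proof.
move=> eq_cc'; have size_cc' : size c = size c'.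
  by move/(congr1 size): eq_cc'; rewrite !size_cat /=; lia.
by move: eq_cc' => /eqP; rewrite eqseq_cat // => /andP[_ /eqP[]].
Qed.

Lemma uniq_addresses k ts a : uniq ts -> uniq (addresses k ts a).
Proof.
elim: k ts a => [//|k IH] ts a uts /=.
apply/andP; split.
  apply/flatten_mapP => -[j _ /suffix_addresses[c]] /(congr1 size).
  by rewrite size_cat /= addnS -addSn => /eqP; rewrite -{1}[size a]add0n eqn_add2r.
elim: ts uts => //= j ts IHts /andP[ts_j uts]; rewrite cat_uniq IH ?uniq_bits ?IHts //=.
rewrite andbT; apply/hasPn => b /flatten_mapP[j' ts_j' /suffix_addresses[c' ->]].
apply/negP => /suffix_addresses[c /cat_cons_suffix_inj eq_j].
by move: ts_j; rewrite -eq_j ts_j'.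
Qed.

Lemma size_addresses_cons k ts a :
  size (addresses k.+1 ts a) = (\sum_(j <- ts) size (addresses k (bits j) (j :: a))).+1.
Proof. by rewrite /= size_flatten sumnE !big_map. Qed.

Lemma size_addresses_fuel k k' ts a a' : {in ts, forall j, j < k} -> {in ts, forall j, j < k'} ->
  size (addresses k.+1 ts a) = size (addresses k'.+1 ts a').
Proof.
elim: k k' ts a a' => [|k IH] [|k'] ts a a' ts_k ts_k';
  rewrite ?(fuel_nil ts_k) ?(fuel_nil ts_k') // !size_addresses_cons.
congr _.+1; apply: eq_big_seq => j ts_j.
by apply: IH; apply/bits_lt/ltnSE; [exact: ts_k | exact: ts_k'].
Qed.

Lemma size_addresses k ts a : {in ts, forall j, j < k} ->
  size (addresses k.+1 ts a) = (\sum_(j <- ts) tree_size j).+1.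
Proof.
case: k => [/fuel_nil->|k ts_k]; first by rewrite big_nil.
rewrite size_addresses_cons; congr _.+1.
apply: eq_big_seq => j ts_j; apply: size_addresses_fuel (bits_lt (leqnn j)).
exact/bits_lt/ltnSE/ts_k.
Qed.

Lemma tree_size_rec i : tree_size i = (\sum_(j <- bits i) tree_size j).+1.
Proof. exact/size_addresses/bits_lt. Qed.

Definition is_child (a b : seq nat) : bool := if b is _ :: b' then b' == a else false.

Definition addr_adj (a b : seq nat) : bool := is_child a b || is_child b a.

Lemma is_child_cons a j : is_child a (j :: a).
Proof. exact: eqxx. Qed.

Lemma is_childP a b : reflect (exists j, b = j :: a) (is_child a b).
Proof.
case: b => [|j b] /=; first by constructor=> -[].
by apply: (iffP eqP) => [-> | [_ [_ ->]]]; first exists j.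
Qed.

Lemma addr_adj_sym : symmetric addr_adj.
Proof. by move=> a b; rewrite /addr_adj orbC. Qed.

Lemma addr_adj_irr : irreflexive addr_adj.
Proof.
move=> a; rewrite /addr_adj orbb; apply/is_childP => -[j] /(congr1 size) /=.
by move/n_Sn.
Qed.

Lemma addr_adj_parent a b : addr_adj a b -> size b <= size a -> b = behead a.
Proof. by case/orP=> /is_childP[j ->] //=; rewrite ltnn. Qed.

Definition sparse (S : seq nat) (N : nat) : Prop :=
  {in S, forall j, N <= \sum_(a <- S | a != j) 2 ^ a}.

Section TreeRel.
Variables (S : seq nat) (N n : nat).
Hypothesis S_N : {in S, forall j, j < N}.
Hypothesis uniq_S : uniq S.
Hypothesis size_n : size (addresses N.+1 S [::]) = n.

(* The vertices of the tree are its addresses, numbered by their position in [addresses]. *)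
Definition tree_addr (u : 'I_n) : seq nat := nth [::] (addresses N.+1 S [::]) u.

Definition tree_rel : rel 'I_n := fun u v => addr_adj (tree_addr u) (tree_addr v).

Lemma mem_tree_addresses b : (b \in addresses N.+1 S [::]) = address S b.
Proof.
apply/idP/idP => [/(mem_addresses _ _ S_N)[c ->] | addr_b]; first by rewrite cats0.
by apply/(mem_addresses _ _ S_N); exists b; rewrite ?cats0.
Qed.

Lemma address_tree_addr u : address S (tree_addr u).
Proof. by rewrite -mem_tree_addresses mem_nth ?size_n. Qed.

Lemma tree_addr_inj : injective tree_addr.
Proof.
move=> u v /eqP; rewrite nth_uniq ?size_n ?uniq_addresses // => /eqP.
exact: val_inj.
Qed.

Lemma tree_addr_onto b : address S b -> exists u, tree_addr u = b.
Proof.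
rewrite -mem_tree_addresses => tree_b.
have b_n : index b (addresses N.+1 S [::]) < n by rewrite -size_n index_mem.
by exists (Ordinal b_n); rewrite /tree_addr nth_index.
Qed.

Lemma tree_rel_sym : symmetric tree_rel.
Proof. by move=> u v; apply: addr_adj_sym. Qed.

Lemma tree_rel_child u v j : tree_addr v = j :: tree_addr u -> tree_rel v u.
Proof. by move=> e_v; rewrite /tree_rel /addr_adj e_v is_child_cons orbT. Qed.

Lemma tree_relP u v : tree_rel v u ->
  (exists j, tree_addr v = j :: tree_addr u) \/ (exists j, tree_addr u = j :: tree_addr v).
Proof. by case/orP=> /is_childP; [right | left]. Qed.

Lemma tree_child u j : j \in child_types S (tree_addr u) ->
  exists v, tree_addr v = j :: tree_addr u.
Proof. by move=> types_j; apply: tree_addr_onto; rewrite /= types_j address_tree_addr. Qed.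

Lemma tree_parent u : tree_addr u != [::] ->
  exists2 v, tree_addr v = behead (tree_addr u) & tree_rel u v.
Proof.
case e_u: (tree_addr u) => [//|j a] _.
have [v e_v] := tree_addr_onto (address_behead (address_tree_addr u)).
by rewrite e_u /= in e_v; exists v; rewrite // (tree_rel_child (j := j)) ?e_u ?e_v.
Qed.

Lemma tree_rel_connect_root u v : tree_addr v = [::] -> connect tree_rel u v.
Proof.
move=> root_v; elim: {u}(size (tree_addr u)) {-2}u (erefl (size (tree_addr u))) => [|m IH] u size_u.
  by rewrite (tree_addr_inj (etrans (size0nil size_u) (esym root_v))).
have /tree_parent[w e_w Ruw] : tree_addr u != [::] by rewrite -size_eq0 size_u.
by apply: connect_trans (connect1 Ruw) (IH w _); rewrite e_w size_behead size_u.
Qed.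

Lemma tree_rel_acyclic (s : seq 'I_n) : uniq s -> 3 <= size s -> ~~ cycle tree_rel s.
Proof.
move=> uniq_s size_s; apply/negP => cycle_s.
(* The two cycle neighbours of a deepest vertex on the cycle would both be its parent. *)
have [m s_m max_m] :
    exists2 m, m \in s & {in s, forall u, size (tree_addr u) <= size (tree_addr m)}.
  case: s size_s {uniq_s cycle_s} => // u0 s _.
  by case: (arg_maxnP (fun u => size (tree_addr u)) (mem_head u0 s)) => m; exists m.
have [i s1 e_s] := rot_to s_m.
case: s1 e_s => [|b [|c s']] e_s; try by move: size_s; rewrite -(size_rot i) e_s.
have parent_m u : u \in s -> tree_rel m u -> tree_addr u = behead (tree_addr m).
  by move=> s_u /addr_adj_parent; apply; apply: max_m.
have mem_s u : u \in m :: b :: c :: s' -> u \in s by rewrite -e_s mem_rot.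
move: cycle_s uniq_s; rewrite -(rot_cycle i) -(rot_uniq i) e_s /= rcons_path.
case/and4P=> Rmb _ _ Rlm /and4P[_ /negP b_s' _ _]; apply: b_s'.
suff -> : b = last c s' by apply: mem_last.
have s_b : b \in s by apply/mem_s/mem_behead/mem_head.
have s_l : last c s' \in s by apply/mem_s/mem_behead/mem_behead/mem_last.
rewrite tree_rel_sym in Rlm.
by apply: tree_addr_inj; rewrite (parent_m b s_b Rmb) (parent_m _ s_l Rlm).
Qed.

Lemma is_tree_tree_rel : is_tree tree_rel.
Proof.
split; first exact: tree_rel_sym.
split; first by move=> u; apply: addr_adj_irr.
split=> [u v | [s /and3P[uniq_s size_s]]]; last exact/negP/tree_rel_acyclic.
have [r root_r] := tree_addr_onto (erefl : address S [::]).
apply: connect_trans (tree_rel_connect_root u root_r) _.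
by rewrite (sym_connect_sym tree_rel_sym); apply: tree_rel_connect_root.
Qed.

Section TreeSpec.
Hypothesis sparse_S : sparse S N.

Local Notation R := (fun u v : 'I_n => tree_rel u v).

Lemma branch_tree_child k u p j : tree_addr u = j :: tree_addr p -> j < k ->
  branch R k (bits j) u p.
Proof.
elim: k => [//|k IH] in u p j *; move=> e_u /ltnSE j_k; split.
- move=> y /tree_relP[[i e_y] | [i]]; last first.
    by rewrite e_u => -[_ /tree_addr_inj ->]; left.
  have := address_tree_addr y; rewrite e_y e_u /= => /andP[j_i _].
  by right; exists i => //; apply: IH e_y (bits_lt j_k j_i).
- move=> i j_i; have [y e_y] : exists y, tree_addr y = i :: tree_addr u.
    by apply: tree_child; rewrite e_u.
  exists y; split; first exact: tree_rel_child e_y.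
    by move=> y_p; move/(congr1 size): e_y; rewrite y_p e_u /=; lia.
  exact: IH e_y (bits_lt j_k j_i).
Qed.

Lemma branch_tree_root k r : tree_addr r = [::] -> N < k -> branch R k S r r.
Proof.
case: k => [//|k] root_r /ltnSE N_k; split.
- move=> y /tree_relP[[j e_y] | [j]]; last by rewrite root_r.
  have := address_tree_addr y; rewrite e_y root_r /= andbT => S_j.
  by right; exists j => //; apply: branch_tree_child e_y (leq_trans (S_N S_j) N_k).
- move=> j S_j; have [y e_y] : exists y, tree_addr y = j :: tree_addr r.
    by apply: tree_child; rewrite root_r.
  exists y; split; first exact: tree_rel_child e_y.
    by move=> y_r; move: e_y; rewrite y_r root_r.
  exact: branch_tree_child e_y (leq_trans (S_N S_j) N_k).
Qed.

(* Seen from a child [u], the root is of no type [t < N]: the types of its other children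
   would all be binary digits of [t], so that [N <= t] by sparseness. *)
Lemma tree_root_not_typed k p u j t : tree_addr p = [::] -> tree_addr u = [:: j] ->
  t < N -> branch R k (bits t) p u -> False.
Proof.
move=> root_p e_u t_N br_p.
have S_j : j \in S by have := address_tree_addr u; rewrite e_u /= andbT.
have sub_t : {subset [seq a <- S | a != j] <= bits t}.
  move=> a; rewrite [a \in filter _ _]mem_filter => /andP[a_j S_a].
  have [c e_c] : exists c, tree_addr c = a :: tree_addr p.
    by apply: tree_child; rewrite root_p.
  have c_u : c <> u by move=> c_u; move: e_c a_j; rewrite c_u e_u root_p => -[->]; rewrite eqxx.
  have [i t_i br_c] := branch_neighbour br_p (tree_rel_child e_c) c_u.
  by rewrite -(branch_bits_inj br_c (branch_tree_child e_c (S_N S_a))).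
have := sum_exp2_le_bits (filter_uniq _ uniq_S) sub_t.
by rewrite big_filter => /(leq_trans (sparse_S S_j)); rewrite leqNgt t_N.
Qed.

(* Climbing from [u] to the root, each ancestor would again be of some type below [N],
   which fails at the root by [tree_root_not_typed]. *)
Lemma tree_not_typed_up k p u j t : tree_addr u = j :: tree_addr p ->
  t < N -> branch R k (bits t) p u -> False.
Proof.
move: (erefl (tree_addr p)); move: {2}(tree_addr p) => b.
elim: b => [|j0 b IH] in p u j k t *; move=> e_p e_u t_N br_p.
  by apply: tree_root_not_typed br_p; rewrite // e_u e_p.
have [pp e_pp] := tree_addr_onto (address_behead (address_tree_addr p)).
rewrite e_p /= in e_pp.
have pp_p : tree_rel pp p by rewrite tree_rel_sym (tree_rel_child (j := j0)) // e_p e_pp.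
have pp_u : pp <> u by move=> pp_u; move/(congr1 size): e_u; rewrite -pp_u e_pp e_p /=; lia.
have [t' t_t' br_pp] := branch_neighbour br_p pp_p pp_u.
by apply: IH br_pp; rewrite ?e_pp ?e_p //; apply: leq_trans (bits_lt (leqnn t) t_t') (ltnW t_N).
Qed.

Lemma tree_child_lt u p j : tree_addr u = j :: tree_addr p -> j < N.
Proof.
move=> e_u; apply: (address_head_lt S_N (a := tree_addr p)).
by rewrite -e_u address_tree_addr.
Qed.

Lemma tree_not_typed_parent u p j : tree_addr u = j :: tree_addr p -> ~ typed R N p u.
Proof. by move=> e_u [t t_N]; apply: tree_not_typed_up e_u t_N. Qed.

Lemma tree_rooted : rooted R S N.
Proof.
have [r root_r] := tree_addr_onto (erefl : address S [::]).
exists r; split=> [|z]; first exact: branch_tree_root.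
have [root_z | nroot_z] := eqVneq (tree_addr z) [::].
  by left; apply: tree_addr_inj; rewrite root_z root_r.
have [w e_w Rzw] := tree_parent nroot_z.
right; exists w => //; case e_z: (tree_addr z) nroot_z e_w => [//|j a] _ /= e_w.
rewrite -e_w in e_z; exists j; first exact: tree_child_lt e_z.
exact: branch_tree_child e_z (tree_child_lt e_z).
Qed.

Lemma tree_siblings_distinct : siblings_distinct R N.
Proof.
move=> x y z i /tree_relP[[jy e_y] | [j e_x]] + y_z i_N br_y; last first.
  by case: (tree_not_typed_parent e_x); exists i.
move=> /tree_relP[[jz e_z] | [j e_x]] br_z; last first.
  by case: (tree_not_typed_parent e_x); exists i.
have i_y := branch_bits_inj br_y (branch_tree_child e_y (tree_child_lt e_y)).
have i_z := branch_bits_inj br_z (branch_tree_child e_z (tree_child_lt e_z)).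
by apply: y_z; apply: tree_addr_inj; rewrite e_y e_z -i_y -i_z.
Qed.

Lemma tree_consistently_oriented : consistently_oriented R N.
Proof.
move=> z w /tree_relP[[j e_z] | [j e_w]] typed_zw typed_wz.
  exact: tree_not_typed_parent e_z typed_wz.
exact: tree_not_typed_parent e_w typed_zw.
Qed.

End TreeSpec.
End TreeRel.

Arguments tree_rel : clear implicits.

(** * Models of the defining sentence *)

Section Model.
Variables (V : Type) (R : V -> V -> Prop) (S : seq nat) (N : nat) (r : V).
Hypothesis R_sym : forall x y, R x y -> R y x.
Hypothesis R_irr : forall x, ~ R x x.
Hypothesis S_N : {in S, forall j, j < N}.
Hypothesis root_r : branch R N.+1 S r r.
Hypothesis cover : forall z, z = r \/ exists2 w, R z w & typed R N z w.
Hypothesis siblings : siblings_distinct R N.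
Hypothesis orient : consistently_oriented R N.

Definition child_of (x p : V) (j : nat) : V :=
  epsilon (inhabits x) (fun y => [/\ R y x, y <> p & branch R N (bits j) y x]).

Lemma child_ofP x p j : (exists y, [/\ R y x, y <> p & branch R N (bits j) y x]) ->
  [/\ R (child_of x p j) x, child_of x p j <> p & branch R N (bits j) (child_of x p j) x].
Proof. exact: epsilon_spec. Qed.

Fixpoint embed_edge (a : seq nat) : V * V :=
  if a is j :: a' then (child_of (embed_edge a').1 (embed_edge a').2 j, (embed_edge a').1)
  else (r, r).

Definition embed (a : seq nat) : V := (embed_edge a).1.

Definition embed_parent (a : seq nat) : V := (embed_edge a).2.

Lemma embed_cons j a : address S (j :: a) -> [/\ R (embed (j :: a)) (embed a),
  embed (j :: a) <> embed_parent a & branch R N (bits j) (embed (j :: a)) (embed a)].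
Proof.
elim: a => [|i a IH] in j *; move=> addr_ja; have /andP[types_j addr_a] := addr_ja.
  by apply: child_ofP; apply: branch_child root_r types_j.
have [_ _ br_ia] := IH i addr_a.
have [y [Ry y_p br_y]] := branch_child br_ia types_j.
have j_N : j < N by apply: address_head_lt S_N addr_ja.
by apply: child_ofP; exists y; split=> //; apply: branch_bits_fuel j_N br_y.
Qed.

Lemma embed_child a y : address S a -> R y (embed a) -> y <> embed_parent a ->
  exists2 i, address S (i :: a) & y = embed (i :: a).
Proof.
move=> addr_a Ry y_p.
have [k br_a] : exists k, branch R k (child_types S a) (embed a) (embed_parent a).
  case: a addr_a {Ry y_p} => [|j a] addr_a; first by exists N.+1.
  by have [_ _ br_a] := embed_cons addr_a; exists N.
have [i types_i br_y] := branch_neighbour br_a Ry y_p.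
have addr_ia : address S (i :: a) by rewrite /= types_i.
have i_N : i < N by apply: address_head_lt S_N addr_ia.
have [R_ia _ br_ia] := embed_cons addr_ia.
exists i => //; apply: NNPP => y_ia.
exact: siblings Ry R_ia y_ia i_N (branch_bits_fuel i_N br_y) br_ia.
Qed.

Lemma embed_cons_neq_root j a : address S (j :: a) -> embed (j :: a) <> r.
Proof.
move=> addr_ja e_r; have [R_ja _ br_ja] := embed_cons addr_ja.
rewrite e_r in R_ja br_ja.
have a_r : embed a <> r by move=> a_r; apply: (R_irr (x := r)); rewrite -{2}a_r.
have [i S_i br_a] := branch_neighbour root_r (R_sym R_ja) a_r.
have j_N : j < N by apply: address_head_lt S_N addr_ja.
by apply: (orient R_ja); [exists j | exists i; first exact: S_N].
Qed.

Lemma embed_inj a b : address S a -> address S b -> embed a = embed b -> a = b.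
Proof.
elim: a b => [|i a IH] [|j b] addr_a addr_b e_ab //.
- by case: (embed_cons_neq_root addr_b); rewrite -e_ab.
- by case: (embed_cons_neq_root addr_a).
have [R_ia _ br_ia] := embed_cons addr_a; have [R_jb _ br_jb] := embed_cons addr_b.
rewrite -e_ab in R_jb br_jb.
have [e_a | n_a] := classic (embed a = embed b).
  rewrite -e_a in br_jb; rewrite (branch_bits_inj br_ia br_jb).
  by rewrite (IH b (address_behead addr_a) (address_behead addr_b) e_a).
have [i' bits_i' br_b] := branch_neighbour br_ia (R_sym R_jb) (nesym n_a).
have i'_N : i' < N by apply: address_head_lt S_N (_ : address S (i' :: i :: a)); rewrite /= bits_i'.
case: (orient R_jb); first by exists j => //; apply: address_head_lt S_N addr_b.
by exists i' => //; apply: branch_bits_fuel i'_N br_b.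
Qed.

Lemma embed_adj a b : address S a -> address S b -> R (embed a) (embed b) -> addr_adj a b.
Proof.
move=> addr_a addr_b Rab; have [e_p | n_p] := classic (embed b = embed_parent a).
  case: a addr_a Rab e_p => [|j a] addr_a Rab e_p; first by move: Rab; rewrite e_p => /R_irr.
  rewrite (embed_inj addr_b (address_behead addr_a) e_p).
  by rewrite /addr_adj is_child_cons orbT.
have [i addr_ia e_b] := embed_child addr_a (R_sym Rab) n_p.
by rewrite (embed_inj addr_b addr_ia e_b) /addr_adj is_child_cons.
Qed.

Lemma embed_typed_child a y i : address S a -> R y (embed a) -> y <> embed_parent a ->
  branch R N (bits i) y (embed a) -> address S (i :: a) /\ y = embed (i :: a).
Proof.
move=> addr_a Ry y_p br_y; have [i' addr_i'a e_y] := embed_child addr_a Ry y_p.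
have [_ _ br_i'] := embed_cons addr_i'a; rewrite -e_y in br_i'.
by rewrite (branch_bits_inj br_y br_i').
Qed.

(* Induction on [N - i]: the parent [w] of [z] is itself of a type larger than [i]. *)
Lemma embed_onto_typed m z w i : N - i <= m -> i < N -> R z w -> branch R N (bits i) z w ->
  exists a, [/\ address S (i :: a), embed (i :: a) = z & embed a = w].
Proof.
elim: m => [|m IH] in z w i *; move=> le_m i_N Rzw br_z.
  by rewrite leqn0 subn_eq0 leqNgt i_N in le_m.
have [w_r | w_r] := classic (w = r).
  subst w; have z_r : z <> r by move=> z_r; apply: (R_irr (x := r)); rewrite -{1}z_r.
  by have [addr_i ->] := embed_typed_child (erefl : address S [::]) Rzw z_r br_z; exists [::].
have [// | [w' Rww' [i' i'_N br_w]]] := cover w.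
have z_w' : z <> w' by move=> z_w'; apply: (orient Rzw); [exists i | exists i'; rewrite ?z_w'].
have [i2 bits_i2 br_z2] := branch_neighbour br_w Rzw z_w'.
rewrite -(branch_bits_inj br_z br_z2) in bits_i2.
have [|a [addr_a e_a e_w']] := IH w w' i' _ i'_N Rww' br_w.
  by have := bits_lt (leqnn i') bits_i2; lia.
rewrite -e_a in Rzw br_z; rewrite -e_w' in z_w'.
have [addr_iia ->] := embed_typed_child addr_a Rzw z_w' br_z.
by exists (i' :: a).
Qed.

Lemma embed_onto z : exists2 a, address S a & embed a = z.
Proof.
have [-> | [w Rzw [i i_N br_z]]] := cover z; first by exists [::].
have [a [addr_ia e_z _]] := embed_onto_typed (leqnn _) i_N Rzw br_z.
by exists (i :: a).
Qed.

Variable n : nat.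
Hypothesis uniq_S : uniq S.
Hypothesis size_n : size (addresses N.+1 S [::]) = n.

Lemma tree_rel_iso : iso (tree_rel S N n) R.
Proof.
have addr_u := address_tree_addr S_N size_n.
exists (fun u => embed (tree_addr S N u)); split=> [u v | ]; last split.
- by move/(embed_inj (addr_u u) (addr_u v)); apply: tree_addr_inj.
- move=> y; have [a addr_a <-] := embed_onto y.
  by have [u <-] := tree_addr_onto S_N size_n addr_a; exists u.
- move=> u v; split=> [/orP[/is_childP[j e_v] | /is_childP[j e_u]] | /embed_adj]; last exact.
  + by apply: R_sym; have [] := embed_cons (_ : address S (j :: tree_addr S N u)); rewrite -e_v.
  + by have [] := embed_cons (_ : address S (j :: tree_addr S N v)); rewrite -e_u.
Qed.

End Model.

(** * Diagram sentences *)

Fixpoint FExs (k : nat) (f : form) : form := if k is k'.+1 then FEx (FExs k' f) else f.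

Lemma qr_FExs k f : qr (FExs k f) = k + qr f.
Proof. by elim: k => //= k ->. Qed.

Lemma bounded_FExs k f d : bounded d (FExs k f) = bounded (k + d) f.
Proof. by elim: k d => //= k IH d; rewrite IH addSnnS. Qed.

Lemma sat_FExs (V : Type) (R : V -> V -> Prop) k f env :
  sat R env (FExs k f) <-> exists2 l, size l = k & sat R (l ++ env) f.
Proof.
elim: k env => [|k IH] env /=; first by split=> [|[[]]] //; exists [::].
split=> [[x /IH[l size_l sat_l]] | [l]].
  by exists (rcons l x); rewrite ?size_rcons ?size_l // cat_rcons.
case/lastP: l => [//|l x]; rewrite size_rcons => -[size_l] sat_l.
by exists x; apply/IH; exists l; rewrite // -cat_rcons.
Qed.

Lemma onth_nth (T : Type) (s : seq T) x0 i : i < size s -> onth s i = Some (nth x0 s i).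
Proof. by elim: s i => [|x s IH] [|i] //= /IH. Qed.

Section Diagram.
Variables (m : nat) (e : rel 'I_m.+1).
Local Notation n := m.+1.

Definition neq_literal (i j : nat) : form := if i == j then FTrue else FNot (FEq i j).

Definition adj_literal (i j : nat) : form :=
  if e (inord i) (inord j) then FAdj i j else FNot (FAdj i j).

Definition all_pairs_form (F : nat -> nat -> form) : form :=
  FAnds [seq FAnds [seq F i j | j <- iota 0 n] | i <- iota 0 n].

Definition exhaust_form : form := FAll (FOrs [seq FEq 0 i.+1 | i <- iota 0 n]).

(* There are [n] pairwise distinct elements [x_0, ..., x_{n-1}] (variable [i] is [x_i]),
   adjacent exactly as in [e], and they exhaust the universe. *)
Definition diagram_body : form :=
  FAnd (all_pairs_form neq_literal) (FAnd (all_pairs_form adj_literal) exhaust_form).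

Definition diagram_sentence : form := FExs n diagram_body.

Lemma sat_all_pairs_form (V : Type) (R : V -> V -> Prop) env F :
  sat R env (all_pairs_form F) <-> forall i j, i < n -> j < n -> sat R env (F i j).
Proof.
rewrite /all_pairs_form sat_FAnds; split=> [sat_F i j i_n j_n | sat_F i].
  by move: (sat_F i); rewrite mem_iota => /(_ i_n)/sat_FAnds; apply; rewrite mem_iota.
by rewrite mem_iota => i_n; apply/sat_FAnds => j; rewrite mem_iota; apply: sat_F.
Qed.

Lemma qr_all_pairs_form F Q : (forall i j, qr (F i j) <= Q) -> qr (all_pairs_form F) <= Q.
Proof.
move=> qr_F; rewrite /all_pairs_form qr_FAnds // all_map; apply/allP => i _.
by apply: qr_FAnds; rewrite all_map; apply/allP => j _; apply: qr_F.
Qed.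

Lemma qr_diagram_sentence : qr diagram_sentence <= n.+1.
Proof.
have qr_neq : qr (all_pairs_form neq_literal) <= 1.
  by apply: qr_all_pairs_form => i j; rewrite /neq_literal; case: eqP.
have qr_adj : qr (all_pairs_form adj_literal) <= 1.
  by apply: qr_all_pairs_form => i j; rewrite /adj_literal; case: (e _ _).
have qr_exhaust : qr exhaust_form <= 1.
  change (qr (FOrs [seq FEq 0 i.+1 | i <- iota 0 n]) <= 0).
  by rewrite qr_FOrs // all_map; apply/allP.
rewrite /diagram_sentence qr_FExs -[n.+1]addn1 leq_add2l.
change (maxn (qr (all_pairs_form neq_literal))
             (maxn (qr (all_pairs_form adj_literal)) (qr exhaust_form)) <= 1).
by rewrite geq_max qr_neq geq_max qr_adj.
Qed.

Lemma bounded_all_pairs_form F d : (forall i j, i < n -> j < n -> bounded d (F i j)) ->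
  bounded d (all_pairs_form F).
Proof.
move=> bd_F; rewrite /all_pairs_form bounded_FAnds all_map; apply/allP => i /[!mem_iota] i_n.
change (bounded d (FAnds [seq F i j | j <- iota 0 n])).
by rewrite bounded_FAnds all_map; apply/allP => j /[!mem_iota] j_n; apply: bd_F.
Qed.

Lemma sentence_diagram_sentence : sentence diagram_sentence.
Proof.
rewrite /sentence /diagram_sentence bounded_FExs addn0.
change [&& bounded n (all_pairs_form neq_literal), bounded n (all_pairs_form adj_literal)
         & bounded n.+1 (FOrs [seq FEq 0 i.+1 | i <- iota 0 n])].
apply/and3P; split.
- apply: bounded_all_pairs_form => i j i_n j_n.
  by rewrite /neq_literal; case: eqP => //= _; rewrite i_n j_n.
- apply: bounded_all_pairs_form => i j i_n j_n.
  by rewrite /adj_literal; case: (e _ _) => /=; rewrite i_n j_n.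
- by rewrite bounded_FOrs all_map; apply/allP => i /[!mem_iota] /= i_n.
Qed.

Section DiagramSemantics.
Variables (V : Type) (R : V -> V -> Prop) (l : seq V) (v0 : V).
Hypothesis size_l : size l = n.

Local Notation f := (fun u : 'I_n => nth v0 l u).

Lemma onth_diagram i : i < n -> onth l i = Some (nth v0 l i).
Proof. by rewrite -size_l; apply: onth_nth. Qed.

Lemma sat_neq_pairs : sat R l (all_pairs_form neq_literal) <-> injective f.
Proof.
rewrite sat_all_pairs_form; split=> [neq u v fu_fv | inj_f i j i_n j_n].
  case: (eqVneq (val u) (val v)) => [/val_inj // | uv].
  have := neq u v (ltn_ord u) (ltn_ord v).
  by rewrite /neq_literal (negbTE uv) /= !onth_diagram // => /(_ fu_fv).
rewrite /neq_literal; case: eqP => //= ij; rewrite !onth_diagram // => e_ij; apply: ij.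
have := inj_f (inord i) (inord j); rewrite /= !inordK // => /(_ e_ij) /(congr1 val).
by rewrite /= !inordK.
Qed.

Lemma sat_adj_pairs : sat R l (all_pairs_form adj_literal) <-> forall u v, e u v <-> R (f u) (f v).
Proof.
rewrite sat_all_pairs_form; split=> [adj u v | adj_f i j i_n j_n].
  by have := adj u v (ltn_ord u) (ltn_ord v); rewrite /adj_literal !inord_val;
    case: (e _ _) => /=; rewrite !onth_diagram.
have := adj_f (inord i) (inord j); rewrite /adj_literal /= !inordK //.
by case: (e _ _) => /=; rewrite !onth_diagram // => -[to_R of_R]; [apply: to_R | move/of_R].
Qed.

Lemma sat_exhaust_form : sat R l exhaust_form <-> forall y, exists u, f u = y.
Proof.
split=> [ex y | onto].
  have ex_y : sat R (y :: l) (FOrs [seq FEq 0 i.+1 | i <- iota 0 n]) := ex y.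
  case/(sat_FOrs _ (fun i => FEq 0 i.+1)): ex_y => i /[!mem_iota] /= i_n.
  by rewrite /= onth_diagram // => ->; exists (inord i); rewrite /= inordK.
change (forall y, sat R (y :: l) (FOrs [seq FEq 0 i.+1 | i <- iota 0 n])) => y.
apply/(sat_FOrs _ (fun i => FEq 0 i.+1)); have [u <-] := onto y.
by exists (val u); rewrite ?mem_iota //= onth_diagram.
Qed.

Lemma sat_diagram_body : sat R l diagram_body <->
  [/\ injective f, forall y, exists u, f u = y & forall u v, e u v <-> R (f u) (f v)].
Proof.
split=> [[/sat_neq_pairs ? [/sat_adj_pairs ? /sat_exhaust_form ?]] // | ].
by case=> /sat_neq_pairs ? /sat_exhaust_form ? /sat_adj_pairs ?.
Qed.

End DiagramSemantics.

Lemma defines_diagram_sentence : defines e diagram_sentence.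
Proof.
split; first exact: sentence_diagram_sentence.
split=> [|V R _ /sat_FExs[[//|v0 l] size_l]]; last first.
  rewrite cats0 (sat_diagram_body _ v0 size_l) => -[inj_f onto_f adj_f].
  by exists (nth v0 (v0 :: l)).
apply/sat_FExs; exists (enum 'I_n); rewrite ?size_enum_ord // cats0.
apply/(sat_diagram_body _ ord0 (size_enum_ord n)).
have nth_enum (u : 'I_n) : nth ord0 (enum 'I_n) u = u by rewrite nth_ord_enum.
by split=> [u v | y | u v]; rewrite ?nth_enum //; exists y; rewrite nth_enum.
Qed.

End Diagram.

Lemma D_lt_diagram m (e : rel 'I_m.+1) : D_lt e m.+3.
Proof.
exists (diagram_sentence e).
by split; [exact: defines_diagram_sentence | exact: qr_diagram_sentence].
Qed.

(** * Tree sizes *)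

Lemma iota0S m : iota 0 m.+1 = rcons (iota 0 m) m.
Proof. by rewrite -addn1 iotaD cats1. Qed.

Lemma sum_iota0S (F : nat -> nat) m :
  \sum_(i <- iota 0 m.+1) F i = \sum_(i <- iota 0 m) F i + F m.
Proof. by rewrite iota0S -cats1 big_cat big_seq1. Qed.

Lemma lt_exp2_pred K : 2 < K -> K < 2 ^ K.-1.
Proof.
case: K => [|[|[|k]]] // _; have := ltn_expl k (ltnSn 1).
by rewrite /= !expnS; lia.
Qed.

Lemma bits_sub_iota b j : j < 2 ^ b -> {subset bits j <= iota 0 b}.
Proof. by move=> j_b i /[!mem_bits] /(bit_lt_exp2 j_b); rewrite mem_iota. Qed.

Lemma tree_size_le_sum b j : {subset bits j <= iota 0 b} ->
  tree_size j <= (\sum_(i <- iota 0 b) tree_size i).+1.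
Proof. by move=> sub_j; rewrite tree_size_rec ltnS leq_sum_subset ?uniq_bits ?iota_uniq. Qed.

Lemma tree_size_subset_sum m t : t <= \sum_(i <- iota 0 m) tree_size i ->
  exists2 A, subseq A (iota 0 m) & \sum_(a <- A) tree_size a = t.
Proof.
elim: m t => [|m IH] t.
  by rewrite /= big_nil leqn0 => /eqP->; exists [::]; rewrite ?big_nil.
rewrite sum_iota0S iota0S.
case: (leqP t (\sum_(i <- iota 0 m) tree_size i)) => [le_t _ | lt_t le_t].
  by have [A sub_A <-] := IH t le_t; exists A; rewrite // (subseq_trans sub_A) ?subseq_rcons.
have [|A sub_A sum_A] := IH (t - tree_size m); first by rewrite leq_subLR addnC.
exists (rcons A m); first by rewrite -!cats1 cat_subseq.
have := tree_size_le_sum (bits_sub_iota (ltn_expl m (ltnSn 1))).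
by rewrite -cats1 big_cat big_seq1 sum_A => le_m; apply: subnK (leq_trans le_m lt_t).
Qed.

Lemma tree_size_gt0 i : 0 < tree_size i.
Proof. by rewrite tree_size_rec. Qed.

Lemma lt_sum_tree_size K : K < \sum_(i <- iota 0 K.+1) tree_size i.
Proof.
have : \sum_(i <- iota 0 K.+1) 1 <= \sum_(i <- iota 0 K.+1) tree_size i.
  by apply: leq_sum => i _; apply: tree_size_gt0.
by rewrite sum1_size size_iota.
Qed.

Lemma tree_size_two_top K : 2 < K ->
  tree_size K.+1 + tree_size K <= (\sum_(i <- iota 0 K.+1) tree_size i).+1.
Proof.
move=> K_2; rewrite sum_iota0S -addSn leq_add2r.
by apply/tree_size_le_sum/bits_sub_iota/lt_exp2_pred/leqW.
Qed.

(* The least [K > 2] with [t <= |T_0| + ... + |T_K|] will do. *)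
Lemma exists_top_index t : 6 < t -> exists K, [/\ 2 < K, K < t,
  tree_size K + tree_size K.-1 <= t & t <= \sum_(i <- iota 0 K.+1) tree_size i].
Proof.
move=> t_6; suff : forall K, 2 < K -> t <= \sum_(i <- iota 0 K.+1) tree_size i ->
    exists K', [/\ 2 < K', K' < t, tree_size K' + tree_size K'.-1 <= t
                 & t <= \sum_(i <- iota 0 K'.+1) tree_size i].
  by apply; [apply: ltn_trans t_6 | apply/ltnW/lt_sum_tree_size].
elim=> // K IH K1_gt2 le_t; case: (ltnP 2 K) => [K_2 | K_le2].
  case: (leqP t (\sum_(i <- iota 0 K.+1) tree_size i)) => [|lt_t]; first exact: IH.
  exists K.+1; split=> //; first exact: leq_ltn_trans (lt_sum_tree_size K) lt_t.
  exact: leq_trans (tree_size_two_top K_2) lt_t.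
have K2 : K = 2 by apply/eqP; rewrite eqn_leq K_le2.
by rewrite K2 in le_t; exists 3; split=> //; apply: leq_trans t_6.
Qed.

Lemma sparse_top_two K A : 2 < K -> uniq [:: K, K.-1 & A] ->
  sparse [:: K, K.-1 & A] K.+1.
Proof.
move=> K_2 uniq_S j S_j.
have term_le x : x \in [:: K, K.-1 & A] -> x != j ->
    2 ^ x <= \sum_(a <- [:: K, K.-1 & A] | a != j) 2 ^ a.
  by move=> S_x x_j; rewrite -big_filter (bigD1_seq x) ?mem_filter ?x_j ?filter_uniq //= leq_addr.
have [j_K | j_K] := eqVneq j K.
  have K1_j : K.-1 != j by rewrite j_K neq_ltn ltn_predL (leq_ltn_trans (leq0n 2) K_2).
  by apply: leq_trans (lt_exp2_pred K_2) (term_le _ _ K1_j); rewrite !inE eqxx orbT.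
by apply: leq_trans (ltn_expl K (ltnSn 1)) (term_le _ (mem_head _ _) _); rewrite eq_sym.
Qed.

(* [S] consists of [K], [K - 1] and a subset of [[0, K - 1)] making up the remaining size;
   the two large elements make [S] sparse. *)
Lemma exists_sparse_shape n : 7 < n -> exists S N,
  [/\ {in S, forall j, j < N}, uniq S, size (addresses N.+1 S [::]) = n, sparse S N & N < n].
Proof.
case: n => // t t_6; have [K [K_2 K_t le_t t_le]] := exists_top_index t_6.
have [A sub_A sum_A] : exists2 A, subseq A (iota 0 K.-1) &
    \sum_(a <- A) tree_size a = t - (tree_size K + tree_size K.-1).
  apply: tree_size_subset_sum; rewrite leq_subLR.
  by move: t_le; rewrite -(ltn_predK K_2) !sum_iota0S /=; lia.
have A_K a : a \in A -> a < K.-1 by move/(mem_subseq sub_A); rewrite mem_iota.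
have uniq_S : uniq [:: K, K.-1 & A].
  rewrite /= (subseq_uniq sub_A (iota_uniq 0 _)) !inE andbT negb_or.
  rewrite neq_ltn ltn_predL (leq_ltn_trans (leq0n 2) K_2) orbT /=.
  by apply/andP; split; apply/negP => /A_K; rewrite ?ltnn // ltnNge leq_pred.
have S_N : {in [:: K, K.-1 & A], forall j, j < K.+1}.
  move=> j /[!inE] /or3P[/eqP-> // | /eqP-> | /A_K]; first by rewrite ltnS leq_pred.
  by move/ltn_trans; apply; rewrite ltnS leq_pred.
exists [:: K, K.-1 & A], K.+1; split=> //; last exact: sparse_top_two.
by rewrite size_addresses // !big_cons sum_A addnA subnKC.
Qed.

(** * Tower and log-star *)

Lemma tower_leq_logstar n : n <= tower (logstar n).
Proof. by rewrite /logstar; case: ex_minnP. Qed.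

Lemma tower_mono : {homo tower : i j / i <= j}.
Proof. by apply: homo_leq => [//|j i k|i]; [exact: leq_trans | exact/ltnW/ltn_expl]. Qed.

Lemma logstar_gt k n : tower k < n -> k < logstar n.
Proof.
move=> lt_n; rewrite ltnNge; apply/negP => /tower_mono.
by move/(leq_trans (tower_leq_logstar n)); rewrite leqNgt lt_n.
Qed.

Lemma D_lt_leq n (e : rel 'I_n) k k' : k <= k' -> D_lt e k -> D_lt e k'.
Proof. by move=> le_k [phi [def_phi qr_phi]]; exists phi; split=> //; apply: leq_trans le_k. Qed.

Lemma defines_tree_sentence S N n : {in S, forall j, j < N} -> uniq S ->
  size (addresses N.+1 S [::]) = n -> sparse S N ->
  defines (tree_rel S N n) (tree_sentence S N).
Proof.
move=> S_N uniq_S size_n sparse_S; split; first exact: sentence_tree_sentence.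
split; first by apply/sat_tree_sentence; split;
  [exact: tree_rooted | exact: tree_siblings_distinct | exact: tree_consistently_oriented].
move=> V R [R_sym R_irr] /sat_tree_sentence[[r [root_r cover]] siblings orient].
by apply: (tree_rel_iso R_sym R_irr S_N root_r cover siblings orient uniq_S size_n).
Qed.

Lemma tree_of_sparse_shape S N n : {in S, forall j, j < N} -> uniq S ->
  size (addresses N.+1 S [::]) = n -> sparse S N ->
  N < n -> exists e : rel 'I_n, is_tree e /\ D_lt e (logstar n + 5).
Proof.
move=> S_N uniq_S size_n sparse_S N_n; exists (tree_rel S N n).
split; first exact: is_tree_tree_rel.
exists (tree_sentence S N); split; first exact: defines_tree_sentence.
have N_L : N <= tower (logstar n) by apply: leq_trans (ltnW N_n) (tower_leq_logstar n).
by apply: leq_ltn_trans (qr_tree_sentence N_L S_N) _; rewrite ltn_add2l.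
Qed.

Lemma tree_of_small_shape S N m : {in S, forall j, j < N} -> uniq S ->
  size (addresses N.+1 S [::]) = m.+1 -> m <= (logstar m.+1).+2 ->
  exists e : rel 'I_m.+1, is_tree e /\ D_lt e (logstar m.+1 + 5).
Proof.
move=> S_N uniq_S size_m le_m; exists (tree_rel S N m.+1).
split; first exact: is_tree_tree_rel.
apply: D_lt_leq (D_lt_diagram _).
by rewrite -[m.+3]addn3 -[5]/(2 + 3) addnA leq_add2r addn2.
Qed.

Theorem theorem6p1 (n : nat) : 1 <= n ->
  exists e : rel 'I_n, is_tree e /\ D_lt e (logstar n + 5).
Proof.
move=> n_gt0; case: (ltnP 7 n) => [n_gt7 | n_le7].
  have [S [N [S_N uniq_S size_n sparse_S N_n]]] := exists_sparse_shape n_gt7.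
  exact: tree_of_sparse_shape S_N uniq_S size_n sparse_S N_n.
case: n n_gt0 n_le7 => [|[|[|[|[|[|[|[|//]]]]]]]] // _ _.
- by apply: (@tree_of_small_shape [::] 0) => //; apply/allP.
- by apply: (@tree_of_small_shape [:: 0] 1) => //; apply/allP.
- by apply: (@tree_of_small_shape [:: 1] 2) => //; apply/allP.
- by apply: (@tree_of_small_shape [:: 0; 1] 2) => //; [apply/allP | apply: (@logstar_gt 0)].
- by apply: (@tree_of_small_shape [:: 0; 2] 3) => //; [apply/allP | apply: (@logstar_gt 1)].
- by apply: (@tree_of_small_shape [:: 1; 2] 3) => //; [apply/allP | apply: (@logstar_gt 2)].
- apply: (@tree_of_sparse_shape [:: 0; 1; 2] 3) => //; first by apply/allP.
  by move=> j /[!inE] /or3P[] /eqP->; rewrite !big_cons big_nil.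
Qed.
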